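(* Let $Z$ be a separable scattered Tychonoff space whose scattered height $ht(Z)$ equals $2$. Then $Z$ is a $\Delta$-space.
   Context: A space is scattered if every nonempty subset $A$ has a point isolated in $A$. For $A\subseteq X$, $A^{(1)}$ is the set of non-isolated points of $A$ (in the subspace $A$). Derivatives: $X^{(0)}=X$, $X^{(\alpha+1)}=(X^{(\alpha)})^{(1)}$, $X^{(\gamma)}=\bigcap_{\alpha<\gamma}X^{(\alpha)}$ for limit $\gamma$. The scattered height $ht(X)$ of a scattered space is the least ordinal $\alpha$ with $X^{(\alpha)}=\emptyset$. A topological space $X$ is a $\Delta$-space if for every decreasing sequence $\{D_n:n\in\omega\}$ of subsets of $X$ with $\bigcap_n D_n=\emptyset$ there is a decreasing sequence $\{V_n:n\in\omega\}$ of open subsets of $X$ with $D_n\subseteq V_n$ for all $n$ and $\bigcap_n V_n=\emptyset$. *)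

From HB Require Import structures.
From mathcomp Require Import all_boot all_order all_algebra.
From mathcomp Require Import boolp classical_sets functions cardinality.
From mathcomp Require Import reals topology.
From mathcomp Require Import Rstruct Rstruct_topology.
Set Implicit Arguments. Unset Strict Implicit. Unset Printing Implicit Defensive.
Local Open Scope classical_set_scope.

Definition isolated_in {T : topologicalType} (A : set T) (x : T) : Prop :=
  A x /\ exists U : set T, open U /\ U `&` A = [set x].

Definition derived {T : topologicalType} (A : set T) : set T :=
  [set x | A x /\ ~ isolated_in A x].

Fixpoint derived_iter {T : topologicalType} (n : nat) (A : set T) : set T :=
  match n with
  | 0 => A
  | n'.+1 => derived (derived_iter n' A)
  end.

Definition scattered (T : topologicalType) : Prop :=
  forall A : set T, A !=set0 -> exists x, isolated_in A x.

Definition scattered_height_eq (T : topologicalType) (n : nat) : Prop :=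
  derived_iter n [set: T] = set0 /\
  forall m, (m < n)%N -> derived_iter m [set: T] !=set0.

Definition separable (T : topologicalType) : Prop :=
  exists D : set T, countable D /\ dense D.

Definition completely_regular (T : topologicalType) : Prop :=
  forall (a : T) (B : set T), closed B -> ~ B a ->
    exists f : T -> Rdefinitions.R,
      continuous f /\ f a = 0%R /\ (forall b, B b -> f b = 1%R).

Definition tychonoff_space (T : topologicalType) : Prop :=
  accessible_space T /\ completely_regular T.

Definition Delta_space (T : topologicalType) : Prop :=
  forall D : nat -> set T,
    (forall n, D n.+1 `<=` D n) ->
    \bigcap_n D n = set0 ->
    exists V : nat -> set T,
      [/\ (forall n, open (V n)),
          (forall n, V n.+1 `<=` V n),
          (forall n, D n `<=` V n) &
          \bigcap_n V n = set0].

From mathcomp Require Import all_boot classical_sets topology.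
From mathcomp Require Import boolp cardinality.
Set Implicit Arguments. Unset Strict Implicit.
Local Open Scope classical_set_scope.

(* Write Iso for the isolated points of X and Y = X^(1) for the others.
   Every {x} with x in Iso is open, so Iso lies inside every dense set and is
   countable when X is separable; and height 2 means that each point of Y is
   isolated in Y, i.e. has an open neighbourhood U y with U y ∩ Y = {y}.
   Enumerate Iso injectively by idx and let F n be the finite, hence closed,
   set of isolated points of index < n.  Given a decreasing sequence D n with
   empty intersection, put
       V n = (Iso ∩ D n) ∪ ⋃ { U y \ F n | y ∈ Y ∩ D n }.
   These sets are open, decreasing and cover D n.  A point of Y in every V n
   meets only the U y with U y ∩ Y = {itself}, so it lies in every D n; an
   isolated point x leaves U y \ F n as soon as n > idx x, so it lies in
   D n for all large n, hence for all n.  Either way ⋂ V n ⊆ ⋂ D n = ∅. *)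

Lemma decreasing_seq_le (T : Type) (D : nat -> set T) :
  (forall n, D n.+1 `<=` D n) -> forall m n, (n <= m)%N -> D m `<=` D n.
Proof.
move=> dD m n.
exact: (@homo_leq _ D (fun A B => B `<=` A) (fun A => @subset_refl _ A)
         (fun B A C AB BC => subset_trans BC AB) dD n m).
Qed.

Section IsolatedPoints.
Variable X : topologicalType.

Lemma isolated_set1_open (x : X) : ~ derived [set: X] x -> open [set x].
Proof.
move=> nYx; have [[_ [U [oU eU]]]|] := pselect (isolated_in [set: X] x).
  by rewrite setIT in eU; rewrite -eU.
by move=> nI; exfalso; apply: nYx.
Qed.

Lemma isolated_subset_open (A : set X) : A `<=` ~` derived [set: X] -> open A.
Proof.
move=> AI; have -> : A = \bigcup_(x in A) [set x].
  by apply/seteqP; split=> [x Ax|x [y Ay ->]] //; exists x.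
by apply: bigcup_open => x /AI; apply: isolated_set1_open.
Qed.

Lemma dense_contains_isolated (S : set X) :
  dense S -> ~` derived [set: X] `<=` S.
Proof.
move=> dS x /isolated_set1_open ox.
by have [|y [/= -> Sy]] := dS [set x] _ ox; first by exists x.
Qed.

Lemma separable_isolated_countable :
  separable X -> countable (~` derived [set: X]).
Proof.
move=> [S [cS dS]]; apply: sub_countable cS.
by apply: subset_card_le; apply: dense_contains_isolated.
Qed.

Lemma height2_derived_discrete :
  derived (derived [set: X]) = set0 ->
  forall y, derived [set: X] y ->
    exists U, open U /\ U `&` derived [set: X] = [set y].
Proof.
move=> Y2 y Yy; have [[_ iso]|nI] := pselect (isolated_in (derived [set: X]) y).
  exact: iso.
have : derived (derived [set: X]) y by split.
by rewrite Y2.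
Qed.

End IsolatedPoints.

Section Delta_cover.
Variable X : topologicalType.
Hypothesis T1 : accessible_space X.

Let Y := derived [set: X].
Let Iso := ~` Y.

Variable idx : X -> nat.
Hypothesis idx_inj : {in Iso &, injective idx}.

Variable U : X -> set X.
Hypothesis U_open : forall y, Y y -> open (U y).
Hypothesis U_trace : forall y, Y y -> U y `&` Y = [set y].

Definition first_isolated (n : nat) : set X := [set x | Iso x /\ (idx x < n)%N].

Lemma first_isolated_closed n : closed (first_isolated n).
Proof.
apply: (accessible_finite_set_closed.1 T1).
have fin_img : finite_set (idx @` first_isolated n).
  by apply: sub_finite_set (finite_II n) => _ [x [_ lt] <-].
have eq_img : (idx @` first_isolated n #= first_isolated n)%card.
  apply: inj_card_eq => x y; rewrite !inE => -[Ix _] [Iy _].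
  by apply: idx_inj; rewrite inE.
apply: card_le_finite fin_img.
by move: eq_img; rewrite card_eq_le => /andP[].
Qed.

Lemma first_isolated_mono m n : (m <= n)%N -> first_isolated m `<=` first_isolated n.
Proof. by move=> le_mn x [Ix lt]; split=> //; apply: leq_trans le_mn. Qed.

Variable D : nat -> set X.
Hypothesis D_decr : forall n, D n.+1 `<=` D n.

Definition Delta_cover (n : nat) : set X :=
  (Iso `&` D n) `|` \bigcup_(y in Y `&` D n) (U y `\` first_isolated n).

Lemma Delta_cover_open n : open (Delta_cover n).
Proof.
apply: openU; first by apply: isolated_subset_open => x [].
apply: bigcup_open => y [Yy _]; apply: openI; first exact: U_open.
exact/closed_openC/first_isolated_closed.
Qed.

Lemma Delta_cover_decr n : Delta_cover n.+1 `<=` Delta_cover n.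
Proof.
move=> x [[Ix Dx]|[y [Yy Dy] [Uy nF]]]; first by left; split=> //; apply: D_decr.
right; exists y; first by split=> //; apply: D_decr.
by split=> // Fx; apply/nF/(first_isolated_mono (leqnSn n)).
Qed.

Lemma Delta_cover_sub n : D n `<=` Delta_cover n.
Proof.
move=> x Dx; have [Yx|Ix] := pselect (Y x); last by left.
right; exists x => //; split; last by move=> [].
by have /seteqP[_ /(_ x erefl) []] := U_trace Yx.
Qed.

Lemma Delta_cover_derived x n : Y x -> Delta_cover n x -> D n x.
Proof.
move=> Yx [[Ix _]|[y [Yy Dy] [Uy _]]]; first by [].
have /seteqP[/(_ x) xy _] := U_trace Yy.
by rewrite (xy (conj Uy Yx)).
Qed.

Lemma Delta_cover_isolated x n : Iso x -> (idx x < n)%N -> Delta_cover n x -> D n x.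
Proof.
move=> Ix lt [[_ Dx]|[y _ [_ nF]]]; first by [].
by exfalso; apply: nF.
Qed.

Lemma Delta_cover_bigcap : \bigcap_n D n = set0 -> \bigcap_n Delta_cover n = set0.
Proof.
move=> capD; apply/seteqP; split=> x //= Vx.
have Vn n : Delta_cover n x by exact: Vx.
suff : (\bigcap_n D n) x by rewrite capD.
move=> n _.
have [Yx|Ix] := pselect (Y x); first exact: Delta_cover_derived (Vn n).
pose m := maxn n (idx x).+1.
apply: (decreasing_seq_le D_decr (leq_maxl n (idx x).+1)).
by apply: Delta_cover_isolated (Vn m) => //; rewrite leq_max ltnSn orbT.
Qed.

End Delta_cover.

Lemma Delta_space_of_discrete_derived (X : topologicalType) :
  accessible_space X -> countable (~` derived [set: X]) ->
  (forall y, derived [set: X] y ->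
     exists U, open U /\ U `&` derived [set: X] = [set y]) ->
  Delta_space X.
Proof.
move=> T1 /countable_injP[idx idx_inj] Ydisc D D_decr capD.
have pointwise y : exists V, derived [set: X] y ->
    open V /\ V `&` derived [set: X] = [set y].
  by have [/Ydisc[V HV]|nY] := pselect (derived [set: X] y); [exists V|exists set0].
have [U HU] := choice pointwise.
exists (Delta_cover idx U D); split.
- by move=> n; apply: (Delta_cover_open T1 idx_inj) => y /HU[].
- by move=> n; apply: (Delta_cover_decr D_decr (n := n)).
- by move=> n; apply: (Delta_cover_sub idx (fun y Yy => (HU y Yy).2) (n := n)).
- exact: (Delta_cover_bigcap idx (fun y Yy => (HU y Yy).2) D_decr capD).
Qed.

Theorem corollary3p9 (Z : topologicalType) :
  separable Z -> scattered Z -> tychonoff_space Z ->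
  scattered_height_eq Z 2 -> Delta_space Z.
Proof.
move=> sepZ _ [T1 _] [Z2 _].
apply: Delta_space_of_discrete_derived T1 _ _.
- exact: separable_isolated_countable sepZ.
- exact: height2_derived_discrete Z2.
Qed.
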